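(* Let $S=S(k_0,\dots,k_{m-1},k_m)$ with $k_0\geq0$ and $k_i\geq1$ for $1\leq i\leq m$. Then: (i) if $S\neq\varepsilon$, $P_C(S)=S(k_0,\dots,k_{m-1},k_m-1)$ and $P_D(S)=S(k_0,\dots,k_{m-2},k_{m-1}-1)$; (ii) $N(S)=2^{|S|+1}+\sum_{i=1}^{m}(-1)^i\,2^{k_i+k_{i+1}+\cdots+k_m}-c$, where $c=2$ if $m$ is even and $c=1$ if $m$ is odd; that is, $N(S)=2^{k_0+\cdots+k_m+1}-2^{k_1+\cdots+k_m}+2^{k_2+\cdots+k_m}-\cdots+2^{k_m}-2$ if $m$ is even and $N(S)=2^{k_0+\cdots+k_m+1}-2^{k_1+\cdots+k_m}+2^{k_2+\cdots+k_m}-\cdots-2^{k_m}-1$ if $m$ is odd; (iii) $r(S)=2\left(1-2^{-k_0}+2^{-k_0-k_1}-\cdots+(-1)^m2^{-k_0-k_1-\cdots-k_{m-1}}+(-1)^{m+1}2^{-|S|-1}\right)$, and equivalently $r(S)=2\sum_{i=0}^{m+1}(-1)^i2^{-e_i}+(-1)^{m+2}2^{-|S|}$ where $e_i=\sum_{j=0}^{i-1}k_j$ (so $e_0=0$).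
   Context: $\{L,R\}^*$ is the free monoid on $L,R$ (strings), with empty string $\varepsilon$; $|S|$ is the number of symbols of $S$. For $k_0\geq 0$, $k_1,\dots,k_m\geq 1$, $S(k_0,\dots,k_m)$ is the string $R^{k_0}L^{k_1}R^{k_2}\cdots$ with $m+1$ alternating blocks (last block $R^{k_m}$ if $m$ even, $L^{k_m}$ if $m$ odd); every string has exactly one such representation, $\varepsilon=S(0)$; note $|S|=k_0+\cdots+k_m$. Blocks with exponent $0$ are omitted; by convention $S(-1)$ denotes the generalized string $R^{-1}$, and when $m=0$ the expression $S(k_0,\dots,k_{m-2},k_{m-1}-1)$ denotes $L^{-1}$. Parents: $P_L(S)=SR^{-1}$ and $P_R(S)=SL^{-1}$, evaluated recursively with the rules $LL^{-1}=\varepsilon$, $RR^{-1}=\varepsilon$, $LR^{-1}=R^{-1}$, $RL^{-1}=L^{-1}$ (and $\varepsilon R^{-1}=R^{-1}$, $\varepsilon L^{-1}=L^{-1}$). Position: $N\colon\{L,R\}^*\to\mathbb{N}$ is defined by $N(\varepsilon)=0$, $N(SL)=2N(S)+1$, $N(SR)=2N(S)+2$. For $S\neq\varepsilon$ with $n=N(S)$, the close parent is $P_C(S)=P_L(S)$ if $n$ is even and $P_R(S)$ if $n$ is odd; the distant parent is $P_D(S)=P_L(S)$ if $n$ is odd and $P_R(S)$ if $n$ is even. The function $r$ is defined by $r(\varepsilon)=1$, $r(SL)=r(S)-2^{-|SL|}$, $r(SR)=r(S)+2^{-|SR|}$. *)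

From mathcomp Require Import all_boot all_order all_algebra.
Set Implicit Arguments. Unset Strict Implicit. Unset Printing Implicit Defensive.
Import Order.TTheory GRing.Theory Num.Theory.

Inductive letter := L | R.

(* Generalized strings: ordinary strings, or the formal inverses R^{-1}, L^{-1}. *)
Inductive gstr := Str of seq letter | Rinv | Linv.

(* S(k_0,...,k_m) = R^{k_0} L^{k_1} R^{k_2} ...  (blocks with exponent 0 are empty) *)
Definition blk (i : nat) : letter := if odd i then L else R.
Definition mkS (k : seq nat) : seq letter :=
  flatten [seq nseq (nth 0 k i) (blk i) | i <- iota 0 (size k)].

(* S(k_0,...,k_{n-1},k_n - 1) with the paper's conventions:
   for the empty list (i.e. "m = 0" case of k_{m-1}-1) it denotes L^{-1},
   and S(-1) (the list [:: 0]) denotes R^{-1}. *)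
Definition Sdec (k : seq nat) : gstr :=
  match k with
  | [::] => Linv
  | [:: 0] => Rinv
  | _ => Str (mkS (rcons (take (size k).-1 k) ((last 0 k).-1)))
  end.

(* P_L(S) = S R^{-1}, computed with L L^{-1}=eps, R R^{-1}=eps, L R^{-1}=R^{-1},
   R L^{-1}=L^{-1}, eps R^{-1}=R^{-1}, eps L^{-1}=L^{-1}. *)
Fixpoint PL_rev (t : seq letter) : gstr :=
  match t with
  | [::] => Rinv
  | R :: t' => Str (rev t')
  | L :: t' => PL_rev t'
  end.
Fixpoint PR_rev (t : seq letter) : gstr :=
  match t with
  | [::] => Linv
  | L :: t' => Str (rev t')
  | R :: t' => PR_rev t'
  end.
Definition PL (s : seq letter) : gstr := PL_rev (rev s).
Definition PR (s : seq letter) : gstr := PR_rev (rev s).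

Definition N (s : seq letter) : nat :=
  foldl (fun n x => (n.*2 + (if x is L then 1 else 2))%N) 0%N s.

Definition PC (s : seq letter) : gstr := if odd (N s) then PR s else PL s.
Definition PD (s : seq letter) : gstr := if odd (N s) then PL s else PR s.

Local Open Scope ring_scope.
Fixpoint r_rev (t : seq letter) : rat :=
  match t with
  | [::] => 1
  | L :: t' => r_rev t' - (2%:Q) ^- (size t').+1
  | R :: t' => r_rev t' + (2%:Q) ^- (size t').+1
  end.
Definition r (s : seq letter) : rat := r_rev (rev s).

From mathcomp Require Import all_boot all_order all_algebra.
From mathcomp Require Import ring zify.
Import Order.TTheory GRing.Theory Num.Theory.
Set Implicit Arguments. Unset Strict Implicit. Unset Printing Implicit Defensive.

(* Appending a block c^x to a string S gives N(S c^x) = 2^x N(S) + (2^x - 1) d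
   with d = 1 for c = L and d = 2 for c = R, and r(S c^x) = r(S) -+ (2^-|S| -
   2^-(|S|+x)); formulas (ii) and (iii) follow by induction on the number of
   blocks.  For the parents, N(S) is odd exactly when S ends with L, so the
   close parent cancels the last letter c and shortens the last block, while
   the distant parent cancels the other letter: it passes over the whole last
   block and shortens the block before it. *)

Lemma nseqSr (T : Type) n (x : T) : nseq n.+1 x = rcons (nseq n x) x.
Proof. by elim: n => //= n ->. Qed.

Lemma mkS_rcons k x : mkS (rcons k x) = mkS k ++ nseq x (blk (size k)).
Proof.
rewrite /mkS size_rcons -addn1 iotaD map_cat flatten_cat /= nth_rcons ltnn eqxx cats0.
congr (_ ++ _); congr flatten; apply/eq_in_map => i; rewrite mem_iota add0n => /andP[_ ltik].
by rewrite nth_rcons ltik.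
Qed.

Lemma sumn_nth k : sumn k = (\sum_(0 <= j < size k) nth 0 k j)%N.
Proof. by rewrite sumnE (big_nth 0). Qed.

Lemma size_mkS k : size (mkS k) = sumn k.
Proof.
elim/last_ind: k => [|k x IHk] //.
by rewrite mkS_rcons size_cat size_nseq IHk -cats1 sumn_cat /= addn0.
Qed.

Lemma sum_nth_rcons_prefix k x a b : (b <= size k)%N ->
  (\sum_(a <= j < b) nth 0 (rcons k x) j = \sum_(a <= j < b) nth 0 k j)%N.
Proof.
move=> le_b_k; apply: eq_big_nat => j /andP[_ ltjb].
by rewrite nth_rcons (leq_trans ltjb le_b_k).
Qed.

Lemma sum_nth_rcons_suffix k x a : (a <= size k)%N ->
  (\sum_(a <= j < (size k).+1) nth 0 (rcons k x) j
     = \sum_(a <= j < size k) nth 0 k j + x)%N.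
Proof.
move=> le_a_k; rewrite big_nat_recr //= nth_rcons ltnn eqxx.
by rewrite sum_nth_rcons_prefix.
Qed.

Local Open Scope ring_scope.

Lemma N_rcons s c : N (rcons s c) = ((N s).*2 + (if c is L then 1 else 2))%N.
Proof. by rewrite /N foldl_rcons. Qed.

Lemma N_cat_nseq s x c : (N (s ++ nseq x c))%:Z =
  2%:Z ^+ x * (N s)%:Z + (2%:Z ^+ x - 1) * (if c is L then 1 else 2).
Proof.
elim: x s => [|x IHx] s; first by rewrite cats0 expr0 mul1r subrr mul0r addr0.
rewrite -cat_rcons IHx N_rcons PoszD -muln2 PoszM exprS.
by clear IHx; case: c; rewrite /=; ring.
Qed.

Lemma N_mkS m k : size k = m.+1 ->
  (N (mkS k))%:Z = 2%:Z ^+ (size (mkS k)).+1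
     + \sum_(1 <= i < m.+1) (-1) ^+ i * 2%:Z ^+ (\sum_(i <= j < m.+1) nth 0 k j)%N
     - (if odd m then 1 else 2).
Proof.
elim: m k => [|m IHm] k.
  case: k => [|x [|]] //= _.
  rewrite big_geq // /mkS /= cats0 -(cat0s (nseq x R)) N_cat_nseq size_nseq.
  have -> : N [::] = 0%N by [].
  by rewrite exprS /=; ring.
case/lastP: k => [|k x] //; rewrite size_rcons => -[size_k].
rewrite mkS_rcons N_cat_nseq (IHm _ size_k) size_cat size_nseq size_k.
rewrite (@big_nat_recr _ _ _ m.+1 1) //= big_nat1 -size_k nth_rcons ltnn eqxx size_k.
rewrite [in RHS](eq_big_nat _ _ (F2 := fun i =>
  (-1) ^+ i * 2%:Z ^+ (\sum_(i <= j < m.+1) nth 0 k j)%N * 2%:Z ^+ x)); last first.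
  move=> i /andP[_ ltim]; rewrite -size_k sum_nth_rcons_suffix ?size_k; last by lia.
  by rewrite exprD mulrA.
rewrite -big_distrl /=; set A := \sum_(_ <= _ < _) _.
by rewrite !exprS exprD -signr_odd /blk /=; case: (odd m); rewrite /=; ring.
Qed.

Lemma r_rcons s c :
  r (rcons s c) = r s + (if c is L then -1 else 1) * 2%:Q ^- (size s).+1.
Proof. by rewrite /r rev_rcons /= size_rev; case: c; rewrite ?mulN1r ?mul1r. Qed.

Lemma r_cat_nseq s x c : r (s ++ nseq x c) =
  r s + (if c is L then -1 else 1) * (2%:Q ^- size s - 2%:Q ^- (size s + x)).
Proof.
elim: x s => [|x IHx] s; first by rewrite cats0 addn0 subrr mulr0 addr0.
rewrite -cat_rcons IHx r_rcons size_rcons addSn -addnS exprS invfM.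
by clear IHx; case: c; rewrite /=; field; rewrite !expf_neq0.
Qed.

Lemma r_mkS m k : size k = m.+1 ->
  r (mkS k) = 2%:Q * (\sum_(0 <= i < m.+1)
                       (-1) ^+ i * 2%:Q ^- (\sum_(0 <= j < i) nth 0 k j)%N
                     + (-1) ^+ m.+1 * 2%:Q ^- (size (mkS k)).+1).
Proof.
elim: m k => [|m IHm] k.
  case: k => [|x [|]] //= _.
  rewrite big_nat1 big_geq // /mkS /= cats0 -(cat0s (nseq x R)) r_cat_nseq size_nseq.
  have -> : r [::] = 1 by [].
  by rewrite /= add0n !expr0 invr1 expr1 exprS invfM; field; rewrite ?expf_neq0.
case/lastP: k => [|k x] //; rewrite size_rcons => -[size_k].
rewrite mkS_rcons r_cat_nseq (IHm _ size_k) size_cat size_nseq size_k.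
rewrite [in RHS]big_nat_recr //= -size_k sum_nth_rcons_prefix // -sumn_nth -size_mkS.
rewrite size_k [in RHS](eq_big_nat _ _ (F2 := fun i =>
  (-1) ^+ i * 2%:Q ^- (\sum_(0 <= j < i) nth 0 k j)%N)); last first.
  by move=> i /andP[_ ltim]; rewrite sum_nth_rcons_prefix // size_k ltnW.
set A := \sum_(_ <= _ < _) _.
rewrite !exprS exprD !invfM -signr_odd /blk /=.
by case: (odd m); rewrite /=; field; rewrite ?expf_neq0.
Qed.

Lemma r_mkS_alt m k : size k = m.+1 ->
  r (mkS k) = 2%:Q * (\sum_(0 <= i < m.+2)
                       (-1) ^+ i * 2%:Q ^- (\sum_(0 <= j < i) nth 0 k j)%N)
              + (-1) ^+ m.+2 * 2%:Q ^- (size (mkS k)).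
Proof.
move=> size_k; rewrite (r_mkS size_k) (big_nat_recr m.+1) //= -size_k -sumn_nth.
rewrite -size_mkS size_k !exprS invfM.
by set A := \sum_(_ <= _ < _) _; field; rewrite ?expf_neq0.
Qed.

(* [Pinv c s] is the generalized string [s c^{-1}]. *)
Definition Pinv (c : letter) (s : seq letter) : gstr := if c is L then PR s else PL s.

Definition flip_letter (c : letter) : letter := if c is L then R else L.

Lemma Pinv_rcons c s : Pinv c (rcons s c) = Str s.
Proof. by case: c; rewrite /Pinv /PL /PR rev_rcons /= revK. Qed.

Lemma Pinv_flip_cat_nseq c s x :
  Pinv (flip_letter c) (s ++ nseq x c) = Pinv (flip_letter c) s.
Proof. by rewrite /Pinv /PL /PR rev_cat rev_nseq; case: c; elim: x. Qed.

Lemma odd_N_rcons s c : odd (N (rcons s c)) = (if c is L then true else false).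
Proof. by rewrite N_rcons; case: c; rewrite /= ?addn1 ?addn2 /= odd_double. Qed.

Lemma PC_rcons s c : PC (rcons s c) = Pinv c (rcons s c).
Proof. by rewrite /PC odd_N_rcons; case: c. Qed.

Lemma PD_rcons s c : PD (rcons s c) = Pinv (flip_letter c) (rcons s c).
Proof. by rewrite /PD odd_N_rcons; case: c. Qed.

Lemma mkS_rcons_succ k x :
  mkS (rcons k x.+1) = rcons (mkS (rcons k x)) (blk (size k)).
Proof. by rewrite !mkS_rcons nseqSr rcons_cat. Qed.

Lemma Sdec_rcons_succ k x : Sdec (rcons k x.+1) = Str (mkS (rcons k x)).
Proof.
have -> : Sdec (rcons k x.+1)
          = Str (mkS (rcons (take (size k) (rcons k x.+1)) x)).
  by rewrite /Sdec size_rcons last_rcons; case: k => [|[|a] [|b l]].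
by rewrite -[rcons k x.+1]cats1 take_size_cat.
Qed.

(* This includes [k = [:: 0]], where the string is empty and both sides are
   [R^{-1}]. *)
Lemma Pinv_mkS k : (0 < size k)%N -> ((1 < size k)%N -> (0 < last 0 k)%N) ->
  Pinv (blk (size k).-1) (mkS k) = Sdec k.
Proof.
case/lastP: k => [|k [|x]] // _; rewrite size_rcons last_rcons /=.
  by case: k => // a l /(_ isT).
by rewrite mkS_rcons_succ Pinv_rcons Sdec_rcons_succ.
Qed.

Lemma PC_mkS k x : (0 < x)%N -> PC (mkS (rcons k x)) = Sdec (rcons k x).
Proof.
case: x => // x _; rewrite {1}mkS_rcons_succ PC_rcons -mkS_rcons_succ.
by rewrite -Pinv_mkS size_rcons ?last_rcons.
Qed.

Lemma PD_mkS k x : (0 < x)%N -> ((1 < size k)%N -> (0 < last 0 k)%N) ->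
  PD (mkS (rcons k x)) = Sdec k.
Proof.
case: x => // x _ last_k_pos.
rewrite mkS_rcons_succ PD_rcons mkS_rcons rcons_cat -nseqSr.
rewrite Pinv_flip_cat_nseq; case/lastP: k last_k_pos => [|k z] // last_k_pos.
have -> : flip_letter (blk (size (rcons k z))) = blk (size (rcons k z)).-1.
  by rewrite size_rcons /blk /=; case: odd.
by apply: Pinv_mkS last_k_pos; rewrite size_rcons.
Qed.

Theorem theorem2 (m : nat) (k : seq nat)
  (Hsize : size k = m.+1)
  (Hpos : forall i : nat, (1 <= i <= m)%N -> (0 < nth 0 k i)%N) :
  let S := mkS k in
  (S <> [::] -> PC S = Sdec k /\ PD S = Sdec (take m k)) /\
  ((N S)%:Z = (2%:Z) ^+ (size S).+1
     + \sum_(1 <= i < m.+1) (-1) ^+ i * (2%:Z) ^+ (\sum_(i <= j < m.+1) nth 0 k j)%N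
     - (if odd m then 1 else 2)) /\
  (r S = 2%:Q * (\sum_(0 <= i < m.+1)
                    (-1) ^+ i * (2%:Q) ^- (\sum_(0 <= j < i) nth 0 k j)%N
                  + (-1) ^+ m.+1 * (2%:Q) ^- (size S).+1)) /\
  (r S = 2%:Q * (\sum_(0 <= i < m.+2)
                    (-1) ^+ i * (2%:Q) ^- (\sum_(0 <= j < i) nth 0 k j)%N)
         + (-1) ^+ m.+2 * (2%:Q) ^- (size S)).
Proof.
move=> s; split; last by split; [|split]; [exact: N_mkS|exact: r_mkS|exact: r_mkS_alt].
rewrite {}/s; case/lastP: k Hsize Hpos => [|k x] //; rewrite size_rcons => -[size_k] Hpos S_nil.
have x_pos : (0 < x)%N.
  case: m size_k Hpos => [|m] size_k Hpos.
    by clear Hpos; case: k size_k S_nil => // _; case: x.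
  by have := Hpos m.+1; rewrite nth_rcons size_k ltnn eqxx; apply; lia.
have last_k_pos : (1 < size k)%N -> (0 < last 0 k)%N.
  rewrite -nth_last size_k => lt1m.
  have := Hpos m.-1; rewrite nth_rcons size_k prednK ?leqnn; last lia.
  by apply; lia.
have -> : take m (rcons k x) = k by rewrite -cats1 take_size_cat.
by rewrite PC_mkS // PD_mkS.
Qed.
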